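(* There exist $p\in(1,\infty)$ and $M<\infty$ such that for every menu $(R_\theta,p_\theta)_{\theta\in\Theta}$ that is individually rational and incentive compatible, the map $u:\Theta\to\mathbb R^2$, $u(\theta)=\big(U_\theta(R_\theta,p_\theta),\int_\Theta V_\vartheta(R_\vartheta,p_\vartheta)\,d\mu(\vartheta)\big)$, belongs to the Bochner space $L^p(\Theta,\mu;\mathbb R^2)$ and $\|u\|_{L^p}\le M$.
   Context: Setting (Yaari dual-utility insurance model). $(S,\Sigma,\mathbb P)$ is a probability space. Types: $\Theta=[\underline\theta,\bar\theta]$ with Borel $\sigma$-algebra and a probability measure $\mu$ with a Lebesgue density $q$. Fix $\bar L<\infty$. For each $\theta$ the type-$\theta$ agent faces a loss $L_\theta$ (bounded, $\Sigma$-measurable, values in $[0,\bar L]$) with continuous distribution function $F_\theta(l)=\mathbb P(L_\theta\le l)$. Retention functions: $\mathcal R=\{R:[0,\bar L]\to[0,\bar L]: R(0)=0,\ 0\le\partial R(l)/\partial l\le1\}$. A menu is a family $(R_\theta,p_\theta)_{\theta\in\Theta}$ with $R_\theta\in\mathcal R$, $p_\theta\in\mathbb R$. A distortion function is a nondecreasing $g:[0,1]\to[0,1]$ with $g(0)=0,g(1)=1$; type $\theta$ has distortion $g_\theta$, the insurer $g^{In}$. Utilities: $U_\theta(R,p)=-p-\int_0^{\bar L}[1-g_\theta(F_\theta(l))]\frac{\partial R(l)}{\partial l}dl$, $V_\theta(R,p)=p-\int_0^{\bar L}[1-g^{In}(F_\theta(l))](1-\frac{\partial R(l)}{\partial l})dl$,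 no-insurance utility $U_\theta(L_\theta,0)=-\int_0^{\bar L}[1-g_\theta(F_\theta(l))]dl$. Throughout, for every menu the maps $\theta\mapsto U_\theta(R_\theta,p_\theta)$, $\theta\mapsto V_\theta(R_\theta,p_\theta)$ lie in $L^1(\Theta,\mu)$. Individually rational: (P1) $U_\theta(R_\theta,p_\theta)\ge U_\theta(L_\theta,0)$ for all $\theta$ and (P2) $\int_\Theta V_\theta(R_\theta,p_\theta)d\mu\ge0$. Incentive compatible: $U_\theta(R_\theta,p_\theta)\ge U_\theta(R_{\theta'},p_{\theta'})$ for all $\theta,\theta'$. $L^p(\Theta,\mu;\mathbb R^2)$ is the Bochner space of strongly measurable $u$ with $\|u\|_{L^p}=(\int_\Theta\|u(\theta)\|^p d\mu)^{1/p}<\infty$, $\|\cdot\|$ the Euclidean norm. *)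

From HB Require Import structures.
From mathcomp Require Import all_boot all_order all_algebra.
From mathcomp Require Import all_classical all_reals all_analysis.
Set Implicit Arguments. Unset Strict Implicit. Unset Printing Implicit Defensive.
Import Order.TTheory GRing.Theory Num.Theory.
Import numFieldNormedType.Exports.
Local Open Scope classical_set_scope.
Local Open Scope ring_scope.

Section Yaari.
Variable R : realType.

Definition is_distortion (g : R -> R) : Prop :=
  [/\ g 0 = 0, g 1 = 1,
      (forall x, 0 <= x <= 1 -> 0 <= g x <= 1) &
      (forall x y, 0 <= x <= 1 -> 0 <= y <= 1 -> x <= y -> g x <= g y)].

Definition is_retention (Lbar : R) (f : R -> R) : Prop :=
  [/\ f 0 = 0,
      (forall l, 0 <= l <= Lbar -> 0 <= f l <= Lbar) &
      (forall l, 0 <= l <= Lbar -> derivable f l 1 /\ 0 <= derive1 f l <= 1)].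

Definition distfun d (S : measurableType d) (P : probability S R) (X : S -> R)
  (l : R) : R := fine (P [set s | X s <= l]).

Definition integral0L (Lbar : R) (h : R -> R) : R :=
  Rintegral (@lebesgue_measure R) `[0, Lbar]%classic h.

Definition Uutil (Lbar : R) (g F : R -> R) (f : R -> R) (p : R) : R :=
  - p - integral0L Lbar (fun l => (1 - g (F l)) * derive1 f l).

Definition Vutil (Lbar : R) (gIn F : R -> R) (f : R -> R) (p : R) : R :=
  p - integral0L Lbar (fun l => (1 - gIn (F l)) * (1 - derive1 f l)).

(* no-insurance utility U_theta(L_theta, 0) *)
Definition Unone (Lbar : R) (g F : R -> R) : R :=
  - integral0L Lbar (fun l => 1 - g (F l)).

Definition euclid2 (a b : R) : R := Num.sqrt (a ^+ 2 + b ^+ 2).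

(* u = (u1,u2) belongs to the Bochner space L^p(D, mu; R^2):
   strongly (= Borel, in finite dimension) measurable and
   int_D ||u||^p dmu < oo *)
Definition in_LpR2 d (T : measurableType d) (mu : {measure set T -> \bar R})
  (D : set T) (p : R) (u1 u2 : T -> R) : Prop :=
  [/\ measurable_fun D u1, measurable_fun D u2 &
      (\int[mu]_(x in D) ((euclid2 (u1 x) (u2 x)) `^ p)%:E < +oo)%E].

Definition LpR2_norm d (T : measurableType d) (mu : {measure set T -> \bar R})
  (D : set T) (p : R) (u1 u2 : T -> R) : R :=
  (fine (\int[mu]_(x in D) ((euclid2 (u1 x) (u2 x)) `^ p)%:E)) `^ p^-1.

End Yaari.

From HB Require Import structures.
From mathcomp Require Import all_boot all_order all_algebra.
From mathcomp Require Import all_classical all_reals all_analysis.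
From mathcomp Require Import lra.
Import Order.TTheory GRing.Theory Num.Theory.
Import numFieldNormedType.Exports.
Local Open Scope classical_set_scope.
Local Open Scope ring_scope.

(* Each distorted expected loss in U and V integrates a [0,1]-valued function
   over [0, Lbar], so it lies in [0, K] with K = max Lbar 0.  Hence U_th >= -K
   by (P1); a contract's agent utility varies by at most K across types, so
   incentive compatibility gives U_th >= U_th' - K; and U_th + V_th <= 0.
   Integrating the last two facts in th and using (P2) yields U_th' <= K and
   0 <= int V <= K, so u is bounded by sqrt (2 K^2) and p = 2 works. *)

Section integral_bounds.
Context {R : realType} {d : measure_display} {T : measurableType d}.

(* No measurability of [f] is needed: the integral of a nonnegative function
   is the supremum of the integrals of the simple functions below it. *)
Lemma ge0_integral_le_cst (mu : {measure set T -> \bar R}) (D : set T)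
    (f : T -> R) (c : R) :
  measurable D -> 0 <= c -> (forall x, D x -> 0 <= f x <= c) ->
  (0 <= \int[mu]_(x in D) (f x)%:E <= c%:E * mu D)%E.
Proof.
move=> mD c0 f0c; have f0 x : D x -> (0 <= (f x)%:E)%E.
  by move=> /f0c /andP[f0 _]; rewrite lee_fin.
rewrite integral_ge0//= -integral_cst// (ge0_integralE _ f0).
rewrite (ge0_integralE _ (f := cst c%:E)) => [|x _]; last by rewrite lee_fin.
apply: ereal_sup_le => _ [h hf <-]; exists h => //= x.
apply: le_trans (hf x) _; rewrite /patch; case: ifP => // /set_mem /f0c.
by case/andP=> _; rewrite lee_fin.
Qed.

Variables (mu : probability T R) (D : set T).
Hypotheses (mD : measurable D) (muD : mu D = 1%E).

Lemma Rintegral_ge_cst (f : T -> R) (c : R) :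
  mu.-integrable D (EFin \o f) -> (forall x, D x -> c <= f x) ->
  c <= \int[mu]_(x in D) f x.
Proof.
move=> fi cf; rewrite -[c]mulr1 -[1]/(fine 1%E) -muD -Rintegral_cst//.
exact: le_Rintegral (finite_measure_integrable_cst _ _ mD) fi cf.
Qed.

Lemma Rintegral_le_cst (f : T -> R) (c : R) :
  mu.-integrable D (EFin \o f) -> (forall x, D x -> f x <= c) ->
  \int[mu]_(x in D) f x <= c.
Proof.
move=> fi fc; rewrite -[c]mulr1 -[1]/(fine 1%E) -muD -Rintegral_cst//.
exact: le_Rintegral fi (finite_measure_integrable_cst _ _ mD) fc.
Qed.

End integral_bounds.

Lemma euclid2_le {R : realType} (a b c c' : R) :
  `|a| <= c -> `|b| <= c' -> euclid2 a b <= Num.sqrt (c ^+ 2 + c' ^+ 2).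
Proof.
rewrite !ler_norml => /andP[ac1 ac2] /andP[bc1 bc2].
rewrite ler_sqrt ?addr_ge0 ?sqr_ge0//; nra.
Qed.

Lemma bounded_in_LpR2 {R : realType} {d : measure_display} {T : measurableType d}
    (mu : probability T R) (D : set T) (p c : R) (u1 u2 : T -> R) :
  measurable D -> mu D = 1%E -> 0 < p -> 0 <= c ->
  measurable_fun D u1 -> measurable_fun D u2 ->
  (forall x, D x -> euclid2 (u1 x) (u2 x) <= c) ->
  in_LpR2 mu D p u1 u2 /\ LpR2_norm mu D p u1 u2 <= c.
Proof.
move=> mD muD p0 c0 mu1 mu2 uc.
have upc x : D x -> 0 <= euclid2 (u1 x) (u2 x) `^ p <= c `^ p.
  move=> Dx; rewrite powR_ge0; apply: ge0_ler_powR; rewrite ?nnegrE ?uc//.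
    exact: ltW.
  exact: sqrtr_ge0.
have /andP[I0 Ic] := ge0_integral_le_cst mu D _ _ mD (powR_ge0 c p) upc.
rewrite -[X in (_ * X)%E]/(mu D) muD mule1 in Ic.
have Ifin : (\int[mu]_(x in D) (euclid2 (u1 x) (u2 x) `^ p)%:E < +oo)%E.
  exact: le_lt_trans Ic (ltry _).
split=> //; rewrite /LpR2_norm -[leRHS](powRr1 c0).
rewrite -(mulfV (lt0r_neq0 p0)) powRrM.
apply: ge0_ler_powR; rewrite ?nnegrE ?invr_ge0 ?fine_ge0 ?powR_ge0 ?(ltW p0)//.
by rewrite -lee_fin fineK// ge0_fin_numE.
Qed.

Section utility_bounds.
Context {R : realType} {Lbar : R}.
Local Notation K := (Num.max Lbar 0).

Lemma integral0L_bounds (h : R -> R) :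
  (forall l, 0 <= l <= Lbar -> 0 <= h l <= 1) -> 0 <= integral0L Lbar h <= K.
Proof.
move=> h01; rewrite /integral0L /Rintegral.
set I := integral _ _ _.
have /andP[I0 I1] := ge0_integral_le_cst (@lebesgue_measure R) _ _ _
  (measurable_itv `[0, Lbar]) ler01 (fun l => h01 l).
rewrite -[X in (_ * X)%E]/(lebesgue_measure `[0, Lbar]%classic) in I1.
rewrite lebesgue_measure_itv /= lte_fin mul1e -EFinD subr0 in I1.
case: ifPn I1 => [L0 | L0] I1.
  have Ifin : I \is a fin_num by rewrite ge0_fin_numE// (le_lt_trans I1) ?ltry.
  by rewrite fine_ge0// -lee_fin fineK// (le_trans I1)// lee_fin le_max lexx.
have -> : I = 0%E by apply/eqP; rewrite eq_le I0 I1.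
by rewrite /= lexx le_max lexx orbT.
Qed.

Lemma distortion_compl01 {g : R -> R} {x : R} :
  is_distortion g -> 0 <= x <= 1 -> 0 <= 1 - g x <= 1.
Proof. by case=> _ _ g01 _ /g01 /andP[g0 g1]; rewrite subr_ge0 g1 lerBlDr lerDl. Qed.

Lemma distfun01 {d : measure_display} {S : measurableType d} (P : probability S R)
    (X : S -> R) (l : R) :
  measurable_fun setT X -> 0 <= distfun P X l <= 1.
Proof.
move=> mX; have mXl : measurable [set s | X s <= l].
  have -> : [set s | X s <= l] = X @^-1` `]-oo, l].
    by apply/seteqP; split=> s /=; rewrite in_itv.
  by rewrite -[X in measurable X]setTI; apply: mX => //; exact: measurable_itv.
rewrite /distfun fine_ge0 ?measure_ge0//= -[1]/(fine 1%E).
by rewrite fine_le ?fin_num_measure ?probability_le1.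
Qed.

Context {F : R -> R}.
Hypothesis F01 : forall l, 0 <= F l <= 1.

Lemma Unone_ge (g : R -> R) : is_distortion g -> - K <= Unone Lbar g F.
Proof.
move=> g_dist; have /andP[_ IK] : 0 <= integral0L Lbar (fun l => 1 - g (F l)) <= K.
  by apply: integral0L_bounds => l _; exact: distortion_compl01.
by rewrite /Unone lerN2.
Qed.

Lemma retained_loss_bounds {g f : R -> R} : is_distortion g -> is_retention Lbar f ->
  0 <= integral0L Lbar (fun l => (1 - g (F l)) * derive1 f l) <= K.
Proof.
move=> g_dist [_ _ f'01]; apply: integral0L_bounds => l /f'01 [_ /andP[f'0 f'1]].
have /andP[g0 g1] := distortion_compl01 g_dist (F01 l).
by rewrite mulr_ge0 ?mulr_ile1.
Qed.

Lemma ceded_loss_bounds {g f : R -> R} : is_distortion g -> is_retention Lbar f ->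
  0 <= integral0L Lbar (fun l => (1 - g (F l)) * (1 - derive1 f l)) <= K.
Proof.
move=> g_dist [_ _ f'01]; apply: integral0L_bounds => l /f'01 [_ /andP[f'0 f'1]].
have /andP[g0 g1] := distortion_compl01 g_dist (F01 l).
by rewrite mulr_ge0 ?mulr_ile1 //; lra.
Qed.

Lemma Uutil_bounds (p : R) {g f : R -> R} : is_distortion g -> is_retention Lbar f ->
  - p - K <= Uutil Lbar g F f p <= - p.
Proof.
move=> g_dist /(retained_loss_bounds g_dist) /andP[I0 IK].
by rewrite /Uutil; apply/andP; split; lra.
Qed.

Lemma Uutil_add_Vutil_le0 (p : R) {g gIn f : R -> R} :
  is_distortion g -> is_distortion gIn -> is_retention Lbar f ->
  Uutil Lbar g F f p + Vutil Lbar gIn F f p <= 0.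
Proof.
move=> g_dist gIn_dist f_ret.
have /andP[I0 _] := retained_loss_bounds g_dist f_ret.
have /andP[J0 _] := ceded_loss_bounds gIn_dist f_ret.
by rewrite /Uutil /Vutil; lra.
Qed.

End utility_bounds.

Lemma Uutil_le_other_type {R : realType} (Lbar : R) (F g F' g' f : R -> R) (p : R) :
  (forall l, 0 <= F l <= 1) -> is_distortion g ->
  (forall l, 0 <= F' l <= 1) -> is_distortion g' -> is_retention Lbar f ->
  Uutil Lbar g' F' f p - Num.max Lbar 0 <= Uutil Lbar g F f p.
Proof.
move=> F01 g_dist F'01 g'_dist f_ret.
have /andP[U_ge _] := Uutil_bounds F01 p g_dist f_ret.
have /andP[_ U'_le] := Uutil_bounds F'01 p g'_dist f_ret.
lra.
Qed.

Section menu_bounds.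
Context {R : realType} {d : measure_display} {T : measurableType d}.
(* [u] and [v] are the agent and insurer utilities of a menu; [u_shift] is the
   form in which incentive compatibility is used. *)
Context {mu : probability T R} {D : set T} {K : R} {u v : T -> R}.
Hypotheses (mD : measurable D) (muD : mu D = 1%E).
Hypotheses (iu : mu.-integrable D (EFin \o u)) (iv : mu.-integrable D (EFin \o v)).
Hypothesis u_ge : forall x, D x -> - K <= u x.
Hypothesis u_shift : forall x y, D x -> D y -> u y - K <= u x.
Hypothesis uv_le0 : forall x, D x -> u x + v x <= 0.
Hypothesis Rintegral_v_ge0 : 0 <= \int[mu]_(x in D) v x.

Lemma Rintegral_uv_le0 : \int[mu]_(x in D) u x + \int[mu]_(x in D) v x <= 0.
Proof.
rewrite -RintegralD//; apply: Rintegral_le_cst => //.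
exact: (integrableD mD iu iv).
Qed.

Lemma u_le (y : T) : D y -> u y <= K.
Proof.
move=> Dy; have : u y - K <= \int[mu]_(x in D) u x.
  by apply: Rintegral_ge_cst => // x Dx; exact: u_shift.
have := Rintegral_uv_le0; have := Rintegral_v_ge0; lra.
Qed.

Lemma Rintegral_v_le : \int[mu]_(x in D) v x <= K.
Proof.
have : - K <= \int[mu]_(x in D) u x by exact: Rintegral_ge_cst.
have := Rintegral_uv_le0; lra.
Qed.

End menu_bounds.

Theorem lemma1 (R : realType)
  (* probability space (S, Sigma, P) *)
  (d : measure_display) (S : measurableType d) (P : probability S R)
  (* types Theta = [thl, thh], type distribution mu with Lebesgue density q *)
  (thl thh : R) (mu : probability R R) (q : R -> R)
  (Hmu_supp : mu `[thl, thh]%classic = 1%E)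
  (Hq_meas : measurable_fun setT q) (Hq_ge0 : forall x, 0 <= q x)
  (Hdens : forall A : set R, measurable A ->
     mu A = (\int[@lebesgue_measure R]_(x in A) (q x)%:E)%E)
  (* losses *)
  (Lbar : R) (L : R -> S -> R)
  (HL_meas : forall th, thl <= th <= thh -> measurable_fun setT (L th))
  (HL_bd : forall th, thl <= th <= thh -> forall s, 0 <= L th s <= Lbar)
  (HF_cont : forall th, thl <= th <= thh -> continuous (distfun P (L th)))
  (* distortions *)
  (g : R -> R -> R) (gIn : R -> R)
  (Hg : forall th, thl <= th <= thh -> is_distortion (g th))
  (HgIn : is_distortion gIn) :
  exists p M : R, 1 < p /\
   forall (Rm : R -> R -> R) (pm : R -> R),
   (* (Rm, pm) is a menu *)
   (forall th, thl <= th <= thh -> is_retention Lbar (Rm th)) ->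
   (* standing assumption: U and V maps of the menu lie in L^1(Theta, mu) *)
   mu.-integrable `[thl, thh]%classic
      (fun th => (Uutil Lbar (g th) (distfun P (L th)) (Rm th) (pm th))%:E) ->
   mu.-integrable `[thl, thh]%classic
      (fun th => (Vutil Lbar gIn (distfun P (L th)) (Rm th) (pm th))%:E) ->
   (* individual rationality (P1) *)
   (forall th, thl <= th <= thh ->
      Unone Lbar (g th) (distfun P (L th))
        <= Uutil Lbar (g th) (distfun P (L th)) (Rm th) (pm th)) ->
   (* individual rationality (P2) *)
   0 <= Rintegral mu `[thl, thh]%classic
          (fun th => Vutil Lbar gIn (distfun P (L th)) (Rm th) (pm th)) ->
   (* incentive compatibility *)
   (forall th th', thl <= th <= thh -> thl <= th' <= thh ->
      Uutil Lbar (g th) (distfun P (L th)) (Rm th') (pm th')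
        <= Uutil Lbar (g th) (distfun P (L th)) (Rm th) (pm th)) ->
   let u1 := fun th => Uutil Lbar (g th) (distfun P (L th)) (Rm th) (pm th) in
   let u2 := fun _ : R => Rintegral mu `[thl, thh]%classic
          (fun th => Vutil Lbar gIn (distfun P (L th)) (Rm th) (pm th)) in
   in_LpR2 mu `[thl, thh]%classic p u1 u2 /\ LpR2_norm mu `[thl, thh]%classic p u1 u2 <= M.
Proof.
pose K := Num.max Lbar 0.
exists 2, (Num.sqrt (K ^+ 2 + K ^+ 2)); split=> [|Rm pm Rm_ret iU iV P1 P2 IC u1 u2].
  lra.
set D := `[thl, thh]%classic.
pose v th := Vutil Lbar gIn (distfun P (L th)) (Rm th) (pm th).
have mD : measurable D := measurable_itv _.
have inD th : D th -> thl <= th <= thh by rewrite /D /= in_itv.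
have F01 th : thl <= th <= thh -> forall l, 0 <= distfun P (L th) l <= 1.
  by move=> th_in l; apply: distfun01; exact: HL_meas.
have iU' : mu.-integrable D (EFin \o u1) := iU.
have iV' : mu.-integrable D (EFin \o v) := iV.
have u1_ge th : D th -> - K <= u1 th.
  move=> /inD th_in; apply: le_trans (P1 _ th_in).
  exact: Unone_ge (F01 _ th_in) _ (Hg _ th_in).
have u1_shift th th' : D th -> D th' -> u1 th' - K <= u1 th.
  move=> /inD th_in /inD th'_in; apply: le_trans (IC _ _ th_in th'_in).
  exact: Uutil_le_other_type (F01 _ th_in) (Hg _ th_in)
    (F01 _ th'_in) (Hg _ th'_in) (Rm_ret _ th'_in).
have uv_le0 th : D th -> u1 th + v th <= 0.
  move=> /inD th_in.
  exact: (Uutil_add_Vutil_le0 (F01 _ th_in) _ (Hg _ th_in) HgIn (Rm_ret _ th_in)).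
have u1_le := u_le mD Hmu_supp iU' iV' u1_shift uv_le0 P2.
have IV_le := Rintegral_v_le mD Hmu_supp iU' iV' u1_ge uv_le0.
apply: bounded_in_LpR2 => //; rewrite ?sqrtr_ge0//.
- by apply/measurable_realfun.measurable_EFinP; case/integrableP: iU'.
- exact: measurable_cst.
- move=> th Dth; apply: euclid2_le; rewrite ler_norml ?u1_ge ?u1_le//=.
  by rewrite IV_le (le_trans _ P2)// oppr_le0 le_max lexx orbT.
Qed.
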